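(* Assume the standing setup below. For every $k\in\omega$ there is a $k$-enveloping embedding $\varphi:\mathbf H\to\mathbf G$.
   Context: Standing setup: $L$ is a relational language with no unary relations and with $n_i<\omega$ relations of arity $i$, named $R_{i,j}$ ($1\le j\le n_i$); $\mathbf H$ is a countable $L$-hypergraph with vertex set $\omega$, universal for all countable $L$-hypergraphs (an $L$-hypergraph: all relations injective and symmetric, each set of vertices in at most one relation; embeddings are monotone w.r.t. the enumerations). Let $\mu$ be the largest integer with $n_\mu>0$ (or $\omega$ if none). The signature $\sigma=(\sigma_1,\sigma_2,\dots)$ is $\sigma_i=n_{i+1}+2$ if $i<\mu$ and $\sigma_i=1$ otherwise; $\sigma^{(i)}_j=\sigma_{j+i}$. $I^n_\ell$ denotes the set of tuples $(i_0,\dots,i_{\ell-1})$ with $n>i_0>\dots>i_{\ell-1}\ge0$ and $I^n_{<\omega}=\bigcup_{\ell\ge1}I^n_\ell$; a $\sigma$-valuation function of level $n$ is $f:I^n_{<\omega}\to\omega$ with $f(\bar x)<\sigma_\ell$ for $\bar x\in I^n_\ell$, $|f|=n$. $\mathbf T=(T_0,T_1,\dots)$ with $T_i$ the tree of $\sigma^{(i)}$-valuation functions of finite level ordered by inclusion. $\mathbf G$ is the $L$-hypergraph with vertex set $T_0$ in which, for $x_0,\dots,x_{i-1}\in T_0$ with $|x_0|>\dots>|x_{i-1}|$ ($i\ge2$), $\{x_0,\dots,x_{i-1}\}\in R_{i,j}^{\mathbf G}$ iff $x_0(|x_1|,\dots,|x_{i-1}|)=j$ (and no other sets are related), enumerated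 by: $f\le g$ iff $|f|<|g|$, or $|f|=|g|$ and $f(\bar x)<g(\bar x)$ at the lexicographically smallest $\bar x$ where they differ. Slices: for a valuation function $f$ of level $n$ and $\bar x=(x_0,\dots,x_{m-1})$ with $n>x_0>\dots>x_{m-1}\ge0$, the $\bar x$-slice $f^{\bar x}$ is the valuation function of level $x_{m-1}$ given by $f^{\bar x}(\bar y)=f(\bar x^\frown\bar y)$; an $m$-slice is an $\bar x$-slice with $|\bar x|=m$ (the $0$-slice is $f$; $m$-slices of elements of $T_0$ are elements of $T_m$). $k$-enveloping: an embedding $\varphi:\mathbf H\to\mathbf G$ with range $R$ is $k$-enveloping if there is a partition $\omega=O\cup B$, $O\cap B=\emptyset$, such that for every $f\in R$, every $m<k$ and every $\bar x=(x_0,\dots,x_{m-1})$ for which $f^{\bar x}$ is defined: (1) if $f^{\bar x}$ is not constant zero then $x_i\in O$ for all $i$; (2) if $g\in R$ or $g$ is a constant zero valuation function, $g'$ is an $m$-slice of $g$, and $f^{\bar x}$ and $g'$ are incomparable in $T_m$, then $|f^{\bar x}\wedge g'|\in B$. *)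

From mathcomp Require Import all_boot.
Set Implicit Arguments. Unset Strict Implicit. Unset Printing Implicit Defensive.

(* The language L is given by n : nat -> nat, n i = number of relations of
   arity i (relations R_{i,j}, 1 <= j <= n i).  n 0 is ignored. *)

(* An L-hypergraph on vertex type V is represented by a labelling E of finite
   lists of vertices: E s = j >= 1 means that the set of elements of s is in
   R_{size s, j}; E s = 0 means that it is in no relation.  Relations are
   injective (s duplicate-free) and symmetric (invariant under permutation),
   and each set is in at most one relation (E is a function). *)
Definition is_hyp (n : nat -> nat) (V : eqType) (E : seq V -> nat) : Prop :=
  [/\ (forall s, E s <> 0 -> uniq s /\ 2 <= size s),
      (forall s, E s <= n (size s)) &
      (forall s t, perm_eq s t -> E s = E t)].

Definition hyp_emb (A B : seq nat -> nat) (e : nat -> nat) : Prop :=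
  (forall x y, x < y -> e x < e y) /\
  (forall s : seq nat, uniq s -> A s = B (map e s)).

(* H is universal for countable L-hypergraphs (those with vertex set omega;
   finite ones embed into those by adding isolated vertices at the end). *)
Definition universal (n : nat -> nat) (H : seq nat -> nat) : Prop :=
  forall A : seq nat -> nat, is_hyp n A -> exists e, hyp_emb A H e.

(* "i < mu": mu is the largest arity m >= 1 with n m > 0, or omega if there is
   no largest such m.  So i < mu iff there is no such largest m with m <= i. *)
Definition lt_mu (n : nat -> nat) (i : nat) : Prop :=
  ~ (exists m, [/\ 1 <= m, 0 < n m, (forall j, m < j -> n j = 0) & m <= i]).

(* v < sigma_i, where sigma_i = n_{i+1} + 2 if i < mu and 1 otherwise. *)
Definition lt_sigma (n : nat -> nat) (i v : nat) : Prop :=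
  (lt_mu n i -> v < n i.+1 + 2) /\ (~ lt_mu n i -> v < 1).

Definition inI (l : nat) (x : seq nat) : bool :=
  [&& 0 < size x, sorted (fun a b => b < a) x & all (fun a => a < l) x].

(* A valuation function is represented by its level and a function on lists
   of naturals, required to vanish outside I^level_{<omega}. *)
Definition vfun := (nat * (seq nat -> nat))%type.
Definition lvl (f : vfun) : nat := f.1.

(* f is an element of T_m, i.e. a sigma^(m)-valuation function
   (sigma^(m)_j = sigma_{j+m}). *)
Definition inT (n : nat -> nat) (m : nat) (f : vfun) : Prop :=
  (forall x, inI f.1 x -> lt_sigma n (size x + m) (f.2 x)) /\
  (forall x, ~~ inI f.1 x -> f.2 x = 0).

Definition agree (f g : vfun) (l : nat) : Prop :=
  forall x, inI l x -> f.2 x = g.2 x.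

Definition tle (f g : vfun) : Prop := f.1 <= g.1 /\ agree f g f.1.
Definition comparable (f g : vfun) : Prop := tle f g \/ tle g f.

Definition meet_lvl (f g : vfun) (l : nat) : Prop :=
  [/\ l <= f.1, l <= g.1, agree f g l &
      forall l', l' <= f.1 -> l' <= g.1 -> agree f g l' -> l' <= l].

Fixpoint lexlt (s t : seq nat) : bool :=
  match s, t with
  | [::], [::] => false
  | [::], _ :: _ => true
  | _ :: _, [::] => false
  | a :: s', b :: t' => (a < b) || ((a == b) && lexlt s' t')
  end.

Definition ltG (f g : vfun) : Prop :=
  f.1 < g.1 \/
  (f.1 = g.1 /\ exists x, [/\ inI f.1 x, f.2 x < g.2 x &
      forall y, inI f.1 y -> lexlt y x -> f.2 y = g.2 y]).

(* label of a set of vertices of G (0 = no relation):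
   sort by decreasing level; if the levels are pairwise distinct,
   x_0 :: rest, the set is in R_{i,j} with j = x_0(|x_1|,...,|x_{i-1}|)
   provided 1 <= j <= n_i. *)
Definition labelG (n : nat -> nat) (s : seq vfun) : nat :=
  let t := sort (fun a b : vfun => b.1 <= a.1) s in
  if sorted (fun a b : vfun => b.1 < a.1) t then
    match t with
    | x0 :: rest =>
        let j := x0.2 (map lvl rest) in
        if (1 <= j) && (j <= n (size s)) then j else 0
    | [::] => 0
    end
  else 0.

Definition embHG (n : nat -> nat) (H : seq nat -> nat) (phi : nat -> vfun) : Prop :=
  [/\ (forall v, inT n 0 (phi v)),
      (forall v w, v < w -> ltG (phi v) (phi w)) &
      (forall s : seq nat, uniq s -> 2 <= size s -> H s = labelG n (map phi s))].

Definition slice_def (f : vfun) (x : seq nat) : bool :=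
  sorted (fun a b => b < a) x && all (fun a => a < f.1) x.

Definition slice (f : vfun) (x : seq nat) : vfun :=
  (last f.1 x, fun y => if inI (last f.1 x) y then f.2 (x ++ y) else 0).

Definition const_zero (f : vfun) : Prop := forall y, f.2 y = 0.

Definition enveloping (phi : nat -> vfun) (k : nat) : Prop :=
  exists O B : nat -> Prop,
  [/\ (forall a, O a \/ B a), (forall a, ~ (O a /\ B a)) &
   forall v (x : seq nat), size x < k -> slice_def (phi v) x ->
     (~ const_zero (slice (phi v) x) -> forall a, a \in x -> O a) /\
     (forall g : vfun, (exists w, g = phi w) \/ (exists l, g = (l, fun _ => 0)) ->
      forall y : seq nat, size y = size x -> slice_def g y ->
      ~ comparable (slice (phi v) x) (slice g y) ->
      forall l, meet_lvl (slice (phi v) x) (slice g y) l -> B l)].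

From Pilot Require Import Defs.
From mathcomp Require Import all_boot.
From mathcomp Require Import zify.
From Stdlib Require Import Classical.
Set Implicit Arguments. Unset Strict Implicit. Unset Printing Implicit Defensive.

(* Every countable L-hypergraph H has a k-enveloping embedding phi into G.

   Vertex v goes to a valuation function phi v of level L v,
   where L is strictly increasing with even values.  Below L u, above the
   previous vertex level, sits a block of odd levels coding the "questions"
   (u, r, j) -- is the set u :: r labelled j? -- for r a strictly decreasing
   list below u and j <= M u.  The value of phi v at an index z is computed
   by [decode]: a leading run of vertex levels selects vertices W; if z ends
   there the value is the label H (v :: W), so phi is an embedding
   ([phi_label]); if z ends with one code, the value answers its question.

   Envelopment, with O the even and B the odd numbers: nonzero slices of
   phi v are taken at vertex levels ([slice_phi_even]); slices with fewer
   than k coordinates are [decodable], and two decodable functions agreeing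
   below a vertex level L u agree at L u, since the code levels below L u
   determine every label at u -- this needs labels bounded by M u, whence the
   dependence on k.  Thus incomparable slices meet at odd levels
   ([meet_odd]). *)

Lemma gt_trans : transitive (fun x y : nat => y < x).
Proof. by move=> x y z yx zy; exact: ltn_trans zy yx. Qed.

Lemma path_gt u s : path (fun x y => y < x) u s =
  all (fun x => x < u) s && sorted (fun x y => y < x) s.
Proof. by rewrite (path_sortedE gt_trans). Qed.

(* [below b r]: r is a strictly decreasing list of numbers smaller than b,
   i.e. a finite subset of b listed from the top. *)
Definition below (b : nat) (r : seq nat) : bool :=
  sorted (fun x y => y < x) r && all (fun x => x < b) r.

Lemma below_cons a b r : a < b -> below a r -> below b (a :: r).
Proof.
move=> ab /andP[hs ha]; rewrite /below /= path_gt ha hs /= ab /=.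
by apply/allP => x /(allP ha) xa; exact: ltn_trans xa ab.
Qed.

Lemma below_size b r : below b r -> size r <= b.
Proof.
move=> /andP[hs ha].
have ur : uniq r by apply: (sorted_uniq gt_trans) hs => x; rewrite ltnn.
rewrite -(size_iota 0 b); apply: uniq_leq_size ur _ => x xr.
by rewrite mem_iota /= add0n (allP ha).
Qed.

Fixpoint below_lists (b : nat) : seq (seq nat) :=
  match b with
  | 0 => [:: [::]]
  | b'.+1 => [seq b' :: r | r <- below_lists b'] ++ below_lists b'
  end.

Lemma mem_below_lists b r : below b r -> r \in below_lists b.
Proof.
elim: b r => [|b IH] [|c r] //=; rewrite ?mem_cat.
- by rewrite /below /= andbF.
- by move=> _; rewrite IH ?orbT.
rewrite /below /= path_gt => /andP[/andP[hr hs] /andP[hc ha]].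
move: hr; rewrite ltnS leq_eqVlt in hc; case/orP: hc => [/eqP -> hr|cb hr].
  by rewrite map_f // IH // /below hs hr.
apply/orP; right; apply: IH; rewrite /below /= path_gt hr hs cb /=.
by apply/allP => x /(allP hr) xc; exact: ltn_trans xc cb.
Qed.

Lemma inI_nonnil l y : inI l y -> y != [::].
Proof. by case: y. Qed.

Lemma inI_mono l l' y : l <= l' -> inI l y -> inI l' y.
Proof.
move=> ll /and3P[h1 h2 h3]; rewrite /inI h1 h2 /=.
by apply/allP => a /(allP h3) h; exact: leq_trans h ll.
Qed.

Lemma last_le l x : all (fun a => a < l) x -> last l x <= l.
Proof.
case: x => //= c x; elim: x c => [|d x IH] c /=; first by rewrite andbT => /ltnW.
by move=> /and3P[_ hd hx]; apply: IH; rewrite hd.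
Qed.

Lemma inI_cat f x y : slice_def f x -> inI (last f.1 x) y -> inI f.1 (x ++ y).
Proof.
move=> /andP[hs ha] /and3P[y0 hys hya]; rewrite /inI size_cat all_cat ha /=.
rewrite (leq_trans y0) ?leq_addl //=; apply/andP; split.
  case: x hs ha hya => //= c x hs _ hya.
  by rewrite cat_path hs /= path_gt hya hys.
by apply: sub_all hya => a /leq_trans; apply; exact: last_le.
Qed.

Lemma inI_succ l y : inI l.+1 y -> ~~ inI l y -> exists y', y = l :: y'.
Proof.
case: y => // c y /and3P[_ hs /= /andP[hc _]] hn; exists y.
move: hs; rewrite /= path_gt => /andP[hyc hys].
congr (_ :: _); apply/eqP; rewrite eqn_leq -ltnS hc /= leqNgt; apply/negP => cl.
move: hn; rewrite /inI /= path_gt hyc hys /= cl /=.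
by apply/negP/negPn/allP => a /(allP hyc) ac; exact: ltn_trans ac cl.
Qed.

Lemma incomparable_meet f g l : ~ Defs.comparable f g -> meet_lvl f g l ->
  [/\ l < f.1, l < g.1, agree f g l & ~ agree f g l.+1].
Proof.
move=> nc [lf lg ag mx].
have lf' : l < f.1.
  rewrite ltn_neqAle lf andbT; apply/eqP => e.
  by apply: nc; left; split; rewrite -e.
have lg' : l < g.1.
  rewrite ltn_neqAle lg andbT; apply/eqP => e.
  by apply: nc; right; split; rewrite -e // => y /ag.
split => //.
by move=> ag'; have := mx _ lf' lg' ag'; rewrite ltnn.
Qed.

Lemma first_difference f g l : agree f g l -> ~ agree f g l.+1 ->
  exists y, f.2 (l :: y) <> g.2 (l :: y).
Proof.
move=> ag nag; apply: NNPP => hn; apply: nag => y hy.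
case hyl: (inI l y); first exact: ag.
have [y' ->] := inI_succ hy (negbT hyl).
by apply: NNPP => ne; apply: hn; exists y'.
Qed.

(* Admissible values: sigma_i = n (i+1) + 2 as soon as some relation has
   arity > i (then i < mu), so a value below n (i+1) + 2 is admissible if it
   is 0 or such a relation exists. *)
Lemma lt_sigmaI n i v : v < n i.+1 + 2 ->
  (v != 0 -> exists t, i < t /\ 0 < n t) -> lt_sigma n i v.
Proof.
move=> h1 h2; split => // nmu; case: v h1 h2 => // v _ /(_ isT) [t [it nt]].
exfalso; apply: nmu => [[m [m1 nm hj mi]]].
by move: nt; rewrite hj // (leq_ltn_trans mi it).
Qed.

Lemma lt_sigma0 n i : lt_sigma n i 0.
Proof. by apply: lt_sigmaI; rewrite ?addn2. Qed.

Section Coding.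

(* M u bounds the labels that have to be recovered at the block of levels
   attached to the vertex u. *)
Variable M : nat -> nat.

(* The questions asked at the block of u: "is the set u :: r labelled j?". *)
Definition questions (u : nat) : seq (nat * seq nat * nat) :=
  [seq (u, r, j) | r <- below_lists u, j <- iota 0 (M u).+1].

Definition block_size (u : nat) : nat :=
  (\max_(p <- questions u) pickle p).+1.

(* Levels: the vertex u sits at the even level L u; the odd levels below it
   and above L (u - 1) encode the questions of u. *)
Fixpoint level_base (u : nat) : nat :=
  match u with 0 => block_size 0 | u'.+1 => level_base u' + block_size u end.

Definition L (u : nat) : nat := (level_base u).*2.
Definition code (p : nat * seq nat * nat) : nat := (pickle p).*2.+1.

Lemma L_even u : odd (L u) = false.
Proof. by rewrite /L odd_double. Qed.

Lemma L_lt : {mono L : u w / u < w}.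
Proof.
apply: leqW_mono; apply: leq_mono; apply: homo_ltn; first exact: ltn_trans.
by move=> u; rewrite /L ltn_double /= -addn1 leq_add2l /block_size.
Qed.

Lemma L_inj : injective L.
Proof. by apply: incn_inj; apply: leq_mono => u w; rewrite L_lt. Qed.

Lemma L_ge u : u <= L u.
Proof. by elim: u => // u IH; apply: leq_ltn_trans IH _; rewrite L_lt. Qed.

Lemma block_le_base u : block_size u <= level_base u.
Proof. by case: u => //= u; rewrite leq_addl. Qed.

Lemma code_lt u r j : below u r -> j <= M u -> code (u, r, j) < L u.
Proof.
move=> hr hj; rewrite /code /L -doubleS leq_double.
apply: leq_trans (block_le_base u); rewrite ltnS.
by apply: leq_bigmax_seq => //; apply: allpairs_f; rewrite ?mem_below_lists ?mem_iota.
Qed.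

Definition vertex_at (c : nat) : option nat :=
  let a := find (fun a => L a == c) (iota 0 c.+1) in
  if L a == c then Some a else None.

Definition question_at (c : nat) : option (nat * seq nat * nat) :=
  if odd c then unpickle c./2 else None.

Lemma vertex_atP c a : vertex_at c = Some a -> L a = c.
Proof. by rewrite /vertex_at; case: eqP => // e [<-]. Qed.

Lemma vertex_atL a : vertex_at (L a) = Some a.
Proof.
rewrite /vertex_at; set i := find _ _.
have hh : has (fun b => L b == L a) (iota 0 (L a).+1).
  by apply/hasP; exists a; rewrite // mem_iota ltnS L_ge.
have := nth_find 0 hh; rewrite nth_iota -/i; last by rewrite -(size_iota 0 (L a).+1) -has_find.
by rewrite add0n => /eqP e; rewrite e eqxx (L_inj e).
Qed.

Lemma vertex_at_odd c : odd c -> vertex_at c = None.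
Proof.
by move=> oc; case e: (vertex_at c) => [a|] //; move: oc; rewrite -(vertex_atP e) L_even.
Qed.

Lemma question_at_code p : question_at (code p) = Some p.
Proof. by rewrite /question_at /code /= odd_double /= uphalf_double pickleK. Qed.

Lemma question_at_odd c p : question_at c = Some p -> odd c.
Proof. by rewrite /question_at; case: (odd c). Qed.

(* [decode Q b z] is the value at the index z of the valuation function
   described by the labelling Q of the lists of vertices below b.  A leading
   run of vertex levels L a_0 > L a_1 > ... (with a_0 < b) selects the
   vertices W = a_0 a_1 ...; if z is exhausted the value is Q W, if a single
   code of a question (u, r, j) with u below the last vertex and j > 0
   follows, the value is the answer (Q (W ++ u :: r) == j); otherwise 0. *)
Fixpoint decode (Q : seq nat -> nat) (b : nat) (z : seq nat) : nat :=
  match z with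
  | [::] => 0
  | c :: z' =>
    match vertex_at c with
    | Some a =>
        if a < b then
          (match z' with [::] => Q [:: a] | _ => decode (fun r => Q (a :: r)) a z' end)
        else 0
    | None =>
      match question_at c, z' with
      | Some (u, r, j), [::] =>
          if (u < b) && sorted (fun x y => y < x) (u :: r) && (0 < j)
          then nat_of_bool (Q (u :: r) == j) else 0
      | _, _ => 0
      end
    end
  end.

Lemma decode_vertex_head Q b u y : u < b ->
  decode Q b (L u :: y) =
  match y with [::] => Q [:: u] | _ => decode (fun r => Q (u :: r)) u y end.
Proof. by move=> ub /=; rewrite vertex_atL ub. Qed.

Lemma decode_code Q b u r j : u < b -> below u r -> 0 < j ->
  decode Q b [:: code (u, r, j)] = (Q (u :: r) == j).
Proof.
move=> ub /andP[hs ha] j0 /=; rewrite vertex_at_odd; last by rewrite /= odd_double.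
by rewrite question_at_code ub path_gt ha hs j0.
Qed.

Lemma decode_ext Q1 Q2 b z :
  (forall r, below b r -> r != [::] -> Q1 r = Q2 r) -> decode Q1 b z = decode Q2 b z.
Proof.
elim: z Q1 Q2 b => //= c z IH Q1 Q2 b hQ.
case: (vertex_at c) => [a|].
  case: ifP => // ab; case: z IH => [|c' z'] IH.
    by apply: hQ => //; rewrite /below /= ab.
  by apply: IH => r hr _; apply: hQ => //; exact: below_cons.
case: (question_at c) => [[[u r] j]|] //; case: z IH => // IH.
case: andP => // -[/andP[ub hs] j0]; rewrite hQ //.
by apply: below_cons => //; rewrite /below andbC -path_gt.
Qed.

Lemma decode_zero Q b z : (forall r, Q r = 0) -> decode Q b z = 0.
Proof.
elim: z Q b => //= c z IH Q b hQ.
case: (vertex_at c) => [a|].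
  by case: ifP => // _; case: z IH => [|c' z'] IH; [exact: hQ | apply: IH].
case: (question_at c) => [[[u r] j]|] //; case: z IH => // IH.
by case: ifP => // /andP[_ j0]; rewrite hQ; case: j j0.
Qed.

Lemma decode_nz_head Q b c z : decode Q b (c :: z) != 0 ->
  odd c \/ exists a, c = L a.
Proof.
rewrite /=; case e: (vertex_at c) => [a|].
  by case: ifP => // _ _; right; exists a; rewrite (vertex_atP e).
case e': (question_at c) => [p|]; first by left; exact: question_at_odd e'.
by case: z.
Qed.

Lemma decode_vertices Q b W : below b W -> W != [::] -> decode Q b (map L W) = Q W.
Proof.
elim: W Q b => // a W IH Q b; rewrite /below /= path_gt.
move=> /andP[/andP[ha hs] /andP[ab hb]] _; rewrite vertex_atL ab.
by case: W IH ha hs hb => // w W IH ha hs hb; rewrite IH // /below hs ha.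
Qed.

Lemma cat_nonnil (x y : seq nat) : y != [::] -> exists c z, x ++ y = c :: z.
Proof. by case: x => [|c x]; case: y => // d y _; [exists d, y | exists c, (x ++ d :: y)]. Qed.

Lemma decode_prefix Q b x :
  (forall y, y != [::] -> decode Q b (x ++ y) = 0) \/
  exists W, [/\ x = map L W, below b W &
    forall y, y != [::] -> decode Q b (x ++ y) = decode (fun r => Q (W ++ r)) (last b W) y].
Proof.
elim: x Q b => [|c x IH] Q b; first by right; exists [::].
have unfold y : y != [::] -> decode Q b ((c :: x) ++ y) =
    match vertex_at c with
    | Some a => if a < b then decode (fun r => Q (a :: r)) a (x ++ y) else 0
    | None => 0 end.
  move=> y0; have [c' [z' ey]] := cat_nonnil x y0; rewrite /= ey -ey.
  by case: (vertex_at c) => // ; case: (question_at c) => [[[u r] j]|].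
move: unfold; case e: (vertex_at c) => [a|] unfold; last by left => y /unfold.
move: unfold; case ab: (a < b) => unfold; last by left => y /unfold.
case: (IH (fun r => Q (a :: r)) a) => [hz|[W [hx hW h]]].
  by left => y /[dup] /unfold ->; exact: hz.
right; exists (a :: W); split; first by rewrite /= hx (vertex_atP e).
  exact: below_cons.
by move=> y /[dup] /unfold ->; exact: h.
Qed.

(* Values of decode respect the signature when Q labels sets of vertices
   that contain d + 1 vertices besides r, i.e. Q r <= n (size r + d + 1). *)
Lemma decode_bound n Q b z d : (forall r, Q r <= n (size r + d.+1)) -> z != [::] ->
  lt_sigma n (size z + d) (decode Q b z).
Proof.
elim: z Q b d => // c z IH Q b d hQ _ /=.
case e: (vertex_at c) => [a|].
  case ab: (a < b); last exact: lt_sigma0.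
  case: z IH => [|c' z'] IH; last first.
    by rewrite addSn -addnS; apply: IH => // r; rewrite -addSnnS; exact: hQ.
  apply: lt_sigmaI => [|hq]; first by rewrite (leq_ltn_trans (hQ _)) // addn2.
  exists (d.+2); split => //; move: (hQ [:: a]) hq; rewrite /= add1n.
  by case: (Q _) => // q; case: (n _).
case: (question_at c) => [[[u r] j]|] /=; last exact: lt_sigma0.
case: z IH => [|c' z'] IH /=; last exact: lt_sigma0.
case hc: (_ && _); last exact: lt_sigma0.
apply: lt_sigmaI => [|hqj]; first by case: (_ == _); rewrite ?ltn_addl.
exists (size (u :: r) + d.+1); split; first by rewrite /=; lia.
move: hc hqj (hQ (u :: r)) => /andP[_ j0]; case: (Q (u :: r) =P j) => // -> _.
exact: leq_trans j0.
Qed.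

Definition decoded_by (Q : seq nat -> nat) (b : nat) (s : vfun) : Prop :=
  forall y, s.2 y = if inI s.1 y then decode Q b y else 0.

Definition decodable (s : vfun) : Prop := exists Q b,
  [/\ decoded_by Q b s,
      (forall u, L u < s.1 -> u < b) &
      (forall u r, below u r -> Q (u :: r) <= M u)].

Lemma decodable_zero s : const_zero s -> decodable s.
Proof.
move=> hz; exists (fun _ => 0), s.1; split => //.
- by move=> y; rewrite hz; case: ifP => // _; rewrite decode_zero.
- by move=> u hu; exact: leq_ltn_trans (L_ge u) hu.
Qed.

Lemma decodable_nz_head s c y : decodable s -> s.2 (c :: y) != 0 ->
  odd c \/ exists a, c = L a.
Proof. by move=> [Q [b [h _ _]]]; rewrite h; case: ifP => // _ /decode_nz_head. Qed.

(* The codes below L u determine the labels Q (u :: r): decodable functions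
   agreeing up to L u have the same labels at u, as these are bounded. *)
Lemma decodable_labels s1 s2 Q1 Q2 b1 b2 u r :
  decoded_by Q1 b1 s1 -> decoded_by Q2 b2 s2 -> u < b1 -> u < b2 ->
  L u <= s1.1 -> L u <= s2.1 -> agree s1 s2 (L u) -> below u r ->
  Q1 (u :: r) <= M u -> Q2 (u :: r) <= M u -> Q1 (u :: r) = Q2 (u :: r).
Proof.
move=> h1 h2 ub1 ub2 l1 l2 ag hr m1 m2.
have answer j : 0 < j -> j <= M u -> (Q1 (u :: r) == j) = (Q2 (u :: r) == j).
  move=> j0 jM; have hin : inI (L u) [:: code (u, r, j)] by rewrite /inI /= code_lt.
  have := ag _ hin; rewrite h1 h2 !(inI_mono _ hin) // !decode_code //.
  by case: (Q1 _ == j); case: (Q2 _ == j).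
case: (posnP (Q1 (u :: r))) => e1; last by apply/esym/eqP; rewrite -(answer _ e1 m1).
case: (posnP (Q2 (u :: r))) => e2; first by rewrite e1 e2.
by move: (answer _ e2 m2); rewrite eqxx e1 eq_sym => /eqP e; rewrite e in e2.
Qed.

Lemma agree_past_vertex s1 s2 u : decodable s1 -> decodable s2 ->
  L u < s1.1 -> L u < s2.1 -> agree s1 s2 (L u) -> agree s1 s2 (L u).+1.
Proof.
move=> [Q1 [b1 [h1 hb1 hM1]]] [Q2 [b2 [h2 hb2 hM2]]] lt1 lt2 ag y hy.
case hyl: (inI (L u) y); first exact: ag.
have [y' ey] := inI_succ hy (negbT hyl); subst y.
have hQ r : below u r -> Q1 (u :: r) = Q2 (u :: r).
  move=> hr; apply: (decodable_labels h1 h2 (hb1 _ lt1) (hb2 _ lt2)) => //;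
    [exact: ltnW | exact: ltnW | exact: hM1 | exact: hM2].
rewrite h1 h2 !(inI_mono _ hy) // !decode_vertex_head ?hb1 ?hb2 //.
case: y' {hyl hy} => [|c y'']; first by rewrite hQ.
by apply: decode_ext => r hr _; exact: hQ.
Qed.

Lemma meet_odd s1 s2 l : decodable s1 -> decodable s2 -> ~ Defs.comparable s1 s2 ->
  meet_lvl s1 s2 l -> odd l.
Proof.
move=> d1 d2 nc /(incomparable_meet nc) [lt1 lt2 ag nag].
have [y ne] := first_difference ag nag.
have nz : s1.2 (l :: y) != 0 \/ s2.2 (l :: y) != 0.
  by case: eqP => [e1|]; [right; apply/eqP => e2; apply: ne; rewrite e1 e2 | left].
have [//|[a ea]] : odd l \/ exists a, l = L a.
  by case: nz => nz; [exact: decodable_nz_head d1 nz | exact: decodable_nz_head d2 nz].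
by subst l; case: nag; exact: agree_past_vertex.
Qed.

End Coding.

Section Embedding.

Variables (n : nat -> nat) (k : nat) (H : seq nat -> nat).
Hypothesis H_hyp : is_hyp n H.

(* Labels to be recovered at the block of u come from sets of at most
   k + u + 2 vertices (v, fewer than k slice coordinates, u and r below u). *)
Definition label_bound (u : nat) : nat := \max_(t < u + k + 3) n t.

Definition phi (v : nat) : vfun :=
  (L label_bound v,
   fun z => if inI (L label_bound v) z then decode label_bound (fun r => H (v :: r)) v z else 0).

Lemma phi_inT v : inT n 0 (phi v).
Proof.
split => x /=; last by move/negbTE => ->.
move=> hx; rewrite hx addn0 -[size x]addn0; apply: decode_bound; last exact: inI_nonnil hx.
by move=> r; case: H_hyp => _ hb _; rewrite addn1; exact: (hb (v :: r)).
Qed.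

Lemma sort_phi s : uniq s -> exists t, [/\ perm_eq t s, sorted (fun a b => b < a) t &
  sort (fun a b : vfun => b.1 <= a.1) (map phi s) = map phi t].
Proof.
move=> us; rewrite sort_map; set t := sort _ s; exists t; split => //.
  by rewrite perm_sort.
have : sorted geq t.
  rewrite -(eq_sorted (e := relpre phi (fun a b : vfun => b.1 <= a.1))).
    by apply: sort_sorted => a b /=; exact: leq_total.
  by move=> a b /=; rewrite leqNgt (L_lt label_bound) -leqNgt.
by move=> sg; have := gtn_sorted_uniq_geq t; rewrite sort_uniq us sg.
Qed.

(* phi preserves labels: the top vertex of s reads the label of s at the
   levels of the others. *)
Lemma phi_label s : uniq s -> 2 <= size s -> H s = labelG n (map phi s).
Proof.
move=> us hs; rewrite /labelG; have [[|v0 W] [ps st ->]] := sort_phi us.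
  by rewrite -(perm_size ps) in hs.
have sz : size W = (size s).-1 by rewrite -(perm_size ps).
have hW : below v0 W by move: st; rewrite /= path_gt /below andbC.
have W0 : W != [::] by rewrite -size_eq0 sz; case: (size s) hs => [|[]].
have hin : inI (L label_bound v0) (map (L label_bound) W).
  move: hW => /andP[h1 h2]; rewrite /inI size_map lt0n size_eq0 W0 /= sorted_map all_map.
  by rewrite (sub_sorted _ h1) ?(sub_all _ h2) // => a b /=; rewrite L_lt.
rewrite sorted_map /= (sub_path _ st) => [|a b /=]; last by rewrite L_lt.
rewrite -map_comp /= hin decode_vertices //.
case: H_hyp => _ hb hp; rewrite (hp (v0 :: W) s ps) size_map.
by rewrite hb andbT; case: (posnP (H s)) => [->|].
Qed.

Lemma slice_phi_cases v x : slice_def (phi v) x ->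
  const_zero (slice (phi v) x) \/
  exists W, [/\ x = map (L label_bound) W, below v W &
    decoded_by label_bound (fun r => H (v :: W ++ r)) (last v W) (slice (phi v) x)].
Proof.
move=> hx; case: (decode_prefix label_bound (fun r => H (v :: r)) v x) => [hz|[W [ex hW heq]]].
  left => y /=; case: ifP => // hy.
  by rewrite (inI_cat hx hy) hz // (inI_nonnil hy).
right; exists W; split => // y /=; case: ifP => // hy.
by rewrite (inI_cat hx hy) heq // (inI_nonnil hy).
Qed.

Lemma slice_phi_even v x : slice_def (phi v) x -> ~ const_zero (slice (phi v) x) ->
  forall a, a \in x -> ~~ odd a.
Proof.
move=> /slice_phi_cases [//|[W [-> _ _]]] _ a /mapP[w _ ->].
by rewrite L_even.
Qed.

(* Slices of phi v with fewer than k coordinates are decodable: the sets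
   whose labels they read have fewer than u + k + 3 elements. *)
Lemma slice_phi_decodable v x : size x < k -> slice_def (phi v) x ->
  decodable label_bound (slice (phi v) x).
Proof.
move=> hk /slice_phi_cases [/decodable_zero //|[W [ex _ hval]]].
exists (fun r => H (v :: W ++ r)), (last v W); split => //.
  by move=> u; rewrite /= ex last_map L_lt.
move=> u r hr; case: H_hyp => _ hb _; apply: leq_trans (hb _) _.
have ht : size (v :: W ++ u :: r) < u + k + 3.
  by have := below_size hr; move: hk; rewrite ex size_map /= size_cat /=; lia.
exact: (leq_bigmax (Ordinal ht)).
Qed.

Lemma slice_decodable g y : size y < k ->
  (exists w, g = phi w) \/ (exists l, g = (l, fun _ => 0)) -> slice_def g y ->
  decodable label_bound (slice g y).
Proof.
move=> hky [[w ->]|[l ->]] hy; first exact: slice_phi_decodable.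
by apply: decodable_zero => z /=; case: ifP.
Qed.

Lemma phi_embedding : embHG n H phi.
Proof.
split; [exact: phi_inT | | exact: phi_label].
by move=> v w vw; left; rewrite /= L_lt.
Qed.

Lemma phi_enveloping : enveloping phi k.
Proof.
exists (fun a => ~~ odd a), (fun a => odd a); split.
- by move=> a; case: (odd a); [right|left].
- by move=> a [/negP].
move=> v x hk hx; split; first exact: slice_phi_even.
move=> g hg y hy hgy nc l; apply: meet_odd nc.
  by apply: slice_decodable => //; left; exists v.
by apply: slice_decodable; rewrite ?hy.
Qed.

End Embedding.

Theorem lemma4p4 (n : nat -> nat) (no_unary : n 1 = 0)
  (H : seq nat -> nat) (H_hyp : is_hyp n H) (H_univ : universal n H)
  (k : nat) :
  exists phi : nat -> vfun, embHG n H phi /\ enveloping phi k.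
Proof.
exists (phi n k H); split; first exact: phi_embedding.
exact: phi_enveloping.
Qed.
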